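(* Let $f,g:\mathbb N\to\mathbb C$ and $\beta\in\mathbb C$ satisfy: for every even $n\in\mathbb N$, $g(n+2)f(n+2)-g(n)f(n)\mathbf 1_{\{n\ge2\}}=\beta$. Assume $|f(2n)|>0$ for all $n\ge1$ and that $M_f=\lim_{n\to\infty}n/|f(2n)|\in[0,\infty]$ exists. Let $\mathbb D_{f,\beta}=\{\alpha\in\mathbb C: |1-\alpha\beta|<1,\ |\alpha|<M_f\}$. Then $$\Big[N,\tfrac i2\log\big(g_{N+2}L^2\big)\Big]=-i\mathbf 1$$ holds on the subspace $\mathrm{LH}\{(f_NL^{*2})^n\xi_{\alpha,f}: n\in\mathbb N,\ \alpha\in\mathbb D_{f,\beta}\}$, where $\xi_{\alpha,f}=e^{\alpha f_NL^{*2}}\Omega$.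
   Context: $\ell^2=\ell^2(\mathbb N)$, $\mathbb N=\{0,1,\dots\}$, basis $(\xi_n)$, $\Omega=\xi_0$; $N\xi_n=n\xi_n$ (self-adjoint, maximal domain). $f_NL^{*2}$: $\xi_n\mapsto f(n+2)\xi_{n+2}$; $g_{N+2}L^2$: $\xi_n\mapsto g(n)\xi_{n-2}$ ($n\ge2$), $\xi_0,\xi_1\mapsto0$ (maximal domains). Exponentials by power series on the set where the series converges. For a linear operator $A$, $\mathrm D(\log A)=\{f\in\bigcap_{k\ge0}\mathrm D(A^k):\lim_K\sum_{k=1}^K\frac1k(\mathbf 1-A)^kf\text{ exists}\}$ and $\log Af=-\sum_{k\ge1}\frac1k(\mathbf1-A)^kf$. The commutator $[A,B]=AB-BA$ is defined on $\mathrm D(AB)\cap\mathrm D(BA)$; ''$[A,B]=C$ on a subspace $\mathcal D$'' means $\mathcal D\subset\mathrm D(AB)\cap\mathrm D(BA)$ and $(AB-BA)\varphi=C\varphi$ for all $\varphi\in\mathcal D$. LH denotes linear hull. *)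

From Stdlib Require Import Reals Arith Factorial.
From Coquelicot Require Import Coquelicot.
Open Scope R_scope.

(* Vectors of l^2(N) are represented by their coefficient sequences
   w.r.t. the basis (xi_n): x = sum_n x n xi_n. *)
Definition vec := nat -> C.

Definition l2 (x : vec) : Prop := ex_series (fun n => (Cmod (x n)) ^ 2).

Definition l2norm2 (x : vec) : R := Series (fun n => (Cmod (x n)) ^ 2).

Definition l2conv (v : nat -> vec) (y : vec) : Prop :=
  l2 y /\ (forall K, l2 (v K)) /\
  is_lim_seq (fun K => l2norm2 (fun n => Cminus (v K n) (y n))) 0.

Fixpoint csum (a : nat -> C) (K : nat) : C :=
  match K with
  | O => RtoC 0
  | S K' => Cplus (csum a K') (a K')
  end.

(* Linear operators are represented by their graphs (functional relations
   between l^2 vectors); A x y means x in D(A) and A x = y. *)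
Definition Op := vec -> vec -> Prop.

Definition dom (A : Op) (x : vec) : Prop := exists y, A x y.

Definition Id_op : Op := fun x y => l2 x /\ y = x.

Definition comp (A B : Op) : Op := fun x z => exists y, B x y /\ A y z.

Fixpoint opow (A : Op) (k : nat) : Op :=
  match k with
  | O => Id_op
  | S k' => comp A (opow A k')
  end.

Definition scale (c : C) (A : Op) : Op :=
  fun x y => exists z, A x z /\ y = (fun n => Cmult c (z n)).

Definition one_minus (A : Op) : Op :=
  fun x y => exists z, A x z /\ y = (fun n => Cminus (x n) (z n)).

Definition log_op (A : Op) : Op :=
  fun x y =>
    (forall k, dom (opow A k) x) /\
    exists s : nat -> vec,
      (forall k, opow (one_minus A) k x (s k)) /\
      l2conv (fun K => fun n =>
                 Copp (csum (fun k => Cmult (Cinv (RtoC (INR (S k)))) (s (S k) n)) K))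
             y.

Definition exp_op (A : Op) : Op :=
  fun x y =>
    (forall k, dom (opow A k) x) /\
    exists s : nat -> vec,
      (forall k, opow A k x (s k)) /\
      l2conv (fun K => fun n =>
                 csum (fun k => Cmult (Cinv (RtoC (INR (Factorial.fact k)))) (s k n)) K)
             y.

Definition N_op : Op :=
  fun x y => l2 x /\ l2 y /\ y = (fun n => Cmult (RtoC (INR n)) (x n)).

(* f_N L^{*2} : xi_n |-> f(n+2) xi_{n+2}, maximal domain *)
Definition fNLs2 (f : nat -> C) : Op :=
  fun x y => l2 x /\ l2 y /\
    y = (fun m => match m with
                  | O => RtoC 0
                  | S O => RtoC 0
                  | S (S k) => Cmult (f m) (x k)
                  end).

(* g_{N+2} L^2 : xi_n |-> g(n) xi_{n-2} (n >= 2), xi_0, xi_1 |-> 0, maximal domain *)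
Definition gN2L2 (g : nat -> C) : Op :=
  fun x y => l2 x /\ l2 y /\ y = (fun m => Cmult (g (m + 2)%nat) (x (m + 2)%nat)).

Definition Omega : vec := fun n => match n with O => RtoC 1 | _ => RtoC 0 end.

(* "[A,B] = C on D" at a single vector: phi in D(AB) cap D(BA), (AB - BA) phi = r *)
Definition comm_at (A B : Op) (phi r : vec) : Prop :=
  exists y1 z1 y2 z2,
    B phi y1 /\ A y1 z1 /\ A phi y2 /\ B y2 z2 /\
    r = (fun n => Cminus (z1 n) (z2 n)).

Definition LH (S : vec -> Prop) (phi : vec) : Prop :=
  exists (m : nat) (c : nat -> C) (v : nat -> vec),
    (forall j, (j < m)%nat -> S (v j)) /\
    phi = (fun n => csum (fun j => Cmult (c j) (v j n)) m).

From Stdlib Require Import Reals Lra Lia FunctionalExtensionality.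
From Coquelicot Require Import Coquelicot.

(** On the even subspace [ev u = sum_k u k xi_(2k)] put [T = 1 - g_(N+2) L^2], so that
    [log (g_(N+2) L^2) = - sum_(k>=1) T^k / k].  The hypothesis on [f] and [g] says
    [g(2k+2) f(2k+2) = (k+1) beta], which gives [[T, f_N L^{*2}] = -beta], while
    [[T, N] = -2 g_(N+2) L^2 = -2 (1 - T)].  Both commutators commute with [T], hence
    [[T^k, N] = -2k (T^(k-1) - T^k)], and the series for [[N, log (g_(N+2) L^2)]] telescopes to
    [-2]; multiplying by [i/2] gives [-i].

    Convergence: [xi_(alpha,f)] is an eigenvector of [T] for [1 - alpha beta], of modulus [< 1],
    and [|alpha| < M_f] makes its coefficients decay geometrically.  Hence [T^k xi] decays
    geometrically both in [k] and in the coordinate.  Applying [N] or [f_N L^{*2}] preserves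
    this double decay up to polynomial factors, so it holds on the whole linear hull, where it
    makes every series above converge in [l2]. *)

Open Scope R_scope.

Lemma pow_le_one q n : 0 <= q <= 1 -> q ^ n <= 1.
Proof.
  intros Hq; induction n as [|n IH]; simpl; [lra|].
  pose proof (pow_le q n ltac:(lra)); nra.
Qed.

Lemma pow_antitone q m n : 0 <= q <= 1 -> (m <= n)%nat -> q ^ n <= q ^ m.
Proof.
  intros Hq Hmn. replace n with (m + (n - m))%nat by lia. rewrite pow_add.
  pose proof (pow_le q m ltac:(lra)). pose proof (pow_le_one q (n - m) Hq).
  pose proof (pow_le q (n - m) ltac:(lra)). nra.
Qed.

Lemma Rmax_in_unit a b : 0 <= a < 1 -> 0 <= b < 1 -> 0 <= Rmax a b < 1.
Proof.
  intros Ha Hb. split; [eapply Rle_trans; [|apply Rmax_l]; lra|apply Rmax_lub_lt; lra].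
Qed.

Lemma is_lim_seq_geom_scal c q : 0 <= q < 1 -> is_lim_seq (fun K => c * q ^ K) 0.
Proof.
  intros Hq. replace (Finite 0) with (Rbar_mult c 0) by (simpl; f_equal; ring).
  apply is_lim_seq_scal_l, is_lim_seq_geom. rewrite Rabs_pos_eq; lra.
Qed.

Lemma le_0_of_le_geom x M q : 0 <= q < 1 -> (forall K, x <= M * q ^ K) -> x <= 0.
Proof.
  intros Hq H.
  assert (Hle : Rbar_le x 0).
  { apply (is_lim_seq_le (fun _ => x) (fun K => M * q ^ K)); auto.
    - apply is_lim_seq_const.
    - apply is_lim_seq_geom_scal; auto. }
  exact Hle.
Qed.

Fixpoint rsum (a : nat -> R) (K : nat) : R :=
  match K with O => 0 | S K => rsum a K + a K end.

Lemma rsum_nonneg a K : (forall k, 0 <= a k) -> 0 <= rsum a K.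
Proof. intros Ha; induction K as [|K IH]; simpl; [lra|specialize (Ha K); lra]. Qed.

Lemma rsum_term_le a K k : (forall k, 0 <= a k) -> (k < K)%nat -> a k <= rsum a K.
Proof.
  intros Ha; induction K as [|K IH]; intros Hk; [lia|simpl].
  destruct (Nat.eq_dec k K) as [->|Hne].
  - pose proof (rsum_nonneg a K Ha); lra.
  - specialize (IH ltac:(lia)). specialize (Ha K); lra.
Qed.

Lemma Series_nonneg a : (forall n, 0 <= a n) -> ex_series a -> 0 <= Series a.
Proof.
  intros Ha He.
  assert (H0 : Series (fun _ => 0) = 0).
  { rewrite (Series_ext _ (fun _ => 0 * 0)) by (intros; ring).
    rewrite Series_scal_l; ring. }
  rewrite <- H0. apply Series_le; auto. intros; split; [lra|auto].
Qed.

Lemma Series_split a K : ex_series a ->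
  Series a = rsum a K + Series (fun k => a (K + k)%nat).
Proof.
  intros He. induction K as [|K IH]; simpl.
  - rewrite Rplus_0_l. apply Series_ext; reflexivity.
  - rewrite IH, (Series_incr_1 (fun k => a (K + k)%nat)).
    2: apply (ex_series_incr_n a K); auto.
    rewrite Nat.add_0_r.
    rewrite (Series_ext (fun k => a (K + S k)%nat) (fun k => a (S (K + k)))).
    2: intros; f_equal; lia.
    ring.
Qed.

Lemma Series_term_le a n : (forall n, 0 <= a n) -> ex_series a -> a n <= Series a.
Proof.
  intros Ha He. rewrite (Series_split a (S n) He).
  pose proof (rsum_term_le a (S n) n Ha ltac:(lia)).
  assert (0 <= Series (fun k => a (S n + k)%nat)).
  { apply Series_nonneg; auto. apply (ex_series_incr_n a (S n)); auto. }
  lra.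
Qed.

Lemma Series_le_geom (a : nat -> R) (E q : R) : 0 <= q < 1 ->
  (forall n, 0 <= a n <= E * q ^ n) -> ex_series a /\ Series a <= E / (1 - q).
Proof.
  intros Hq Ha.
  assert (Hg : ex_series (fun n => E * q ^ n)).
  { apply (ex_series_ext (fun n => scal E (q ^ n))); [reflexivity|].
    apply (@ex_series_scal_l R_AbsRing R_NormedModule), ex_series_geom.
    rewrite Rabs_pos_eq; lra. }
  assert (He : ex_series a).
  { apply (@ex_series_le R_AbsRing R_CompleteNormedModule _ (fun n => E * q ^ n)); auto.
    intros n. specialize (Ha n). change (norm (a n)) with (Rabs (a n)).
    rewrite Rabs_pos_eq; lra. }
  split; auto.
  apply Rle_trans with (Series (fun n => E * q ^ n)); [apply Series_le; auto|].
  rewrite Series_scal_l, Series_geom; [unfold Rdiv; lra|rewrite Rabs_pos_eq; lra].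
Qed.

Lemma rsum_Series_tail (a : nat -> R) E q : 0 <= q < 1 ->
  (forall k, Rabs (a k) <= E * q ^ k) ->
  forall K, Rabs (rsum a K - Series a) <= E * q ^ K / (1 - q).
Proof.
  intros Hq Ha K.
  assert (Habs : forall k, 0 <= Rabs (a k) <= E * q ^ k) by (split; auto using Rabs_pos).
  assert (He : ex_series a) by (apply ex_series_Rabs, (Series_le_geom _ _ _ Hq Habs)).
  rewrite (Series_split a K He).
  replace (rsum a K - (rsum a K + Series (fun k => a (K + k)%nat)))
    with (- Series (fun k => a (K + k)%nat)) by ring.
  rewrite Rabs_Ropp.
  assert (Htail : forall k, 0 <= Rabs (a (K + k)%nat) <= (E * q ^ K) * q ^ k).
  { intros k; split; [apply Rabs_pos|]. rewrite Rmult_assoc, <- pow_add. auto. }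
  destruct (Series_le_geom _ _ _ Hq Htail) as [Hex Hle].
  eapply Rle_trans; [apply Series_Rabs; auto|exact Hle].
Qed.

Definition CSeries (a : nat -> C) : C :=
  (Series (fun k => Re (a k)), Series (fun k => Im (a k))).

Lemma csum_Re a K : Re (csum a K) = rsum (fun k => Re (a k)) K.
Proof. induction K as [|K IH]; simpl; auto. rewrite <- IH. reflexivity. Qed.

Lemma csum_Im a K : Im (csum a K) = rsum (fun k => Im (a k)) K.
Proof. induction K as [|K IH]; simpl; auto. rewrite <- IH. reflexivity. Qed.

Lemma im_le_Cmod c : Rabs (Im c) <= Cmod c.
Proof.
  pose proof (Cmod2_alt c). pose proof (Cmod_ge_0 c).
  destruct (Rle_dec 0 (Im c)); [rewrite Rabs_pos_eq|rewrite Rabs_left]; nra.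
Qed.

Lemma Cmod_le_Re_Im c : Cmod c <= Rabs (Re c) + Rabs (Im c).
Proof.
  pose proof (Cmod2_alt c). pose proof (Cmod_ge_0 c).
  pose proof (Rabs_pos (Re c)). pose proof (Rabs_pos (Im c)).
  assert (Re c ^ 2 = Rabs (Re c) ^ 2) by (unfold Rabs; destruct Rcase_abs; ring).
  assert (Im c ^ 2 = Rabs (Im c) ^ 2) by (unfold Rabs; destruct Rcase_abs; ring).
  nra.
Qed.

Lemma csum_CSeries_tail (a : nat -> C) E q : 0 <= q < 1 ->
  (forall k, Cmod (a k) <= E * q ^ k) ->
  forall K, Cmod (csum a K - CSeries a) <= 2 * E * q ^ K / (1 - q).
Proof.
  intros Hq Ha K.
  eapply Rle_trans; [apply Cmod_le_Re_Im|].
  assert (HRe := rsum_Series_tail (fun k => Re (a k)) E q Hq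
                   (fun k => Rle_trans _ _ _ (re_le_Cmod _) (Ha k)) K).
  assert (HIm := rsum_Series_tail (fun k => Im (a k)) E q Hq
                   (fun k => Rle_trans _ _ _ (im_le_Cmod _) (Ha k)) K).
  rewrite <- csum_Re in HRe. rewrite <- csum_Im in HIm.
  change (Re (csum a K - CSeries a)) with (Re (csum a K) - Series (fun k => Re (a k))).
  change (Im (csum a K - CSeries a)) with (Im (csum a K) - Series (fun k => Im (a k))).
  unfold Rdiv in *. lra.
Qed.

(** * Vectors supported on the even basis vectors *)

(** Every vector of the theorem lies in this subspace, and only there do [T = 1 - g_(N+2) L^2]
    and [f_N L^{*2}] commute up to a scalar. *)
Definition ev (u : nat -> C) : vec :=
  fun n => if Nat.even n then u (Nat.div2 n) else RtoC 0.

Lemma even_or_odd n : (exists k, n = 2 * k)%nat \/ (exists k, n = S (2 * k))%nat.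
Proof. destruct (Nat.Even_or_Odd n) as [[k H]|[k H]]; [left|right]; exists k; lia. Qed.

Lemma ev_even u k : ev u (2 * k)%nat = u k.
Proof. unfold ev. rewrite Nat.even_even, Nat.div2_double. reflexivity. Qed.

Lemma ev_odd u k : ev u (S (2 * k))%nat = RtoC 0.
Proof. unfold ev. replace (S (2 * k)) with (2 * k + 1)%nat by lia. rewrite Nat.even_odd. reflexivity. Qed.

Lemma ev_eq (x : vec) u :
  (forall k, x (2 * k)%nat = u k) -> (forall k, x (S (2 * k)) = RtoC 0) -> x = ev u.
Proof.
  intros Hev Hodd. apply functional_extensionality; intros n.
  destruct (even_or_odd n) as [[k ->]|[k ->]]; [rewrite ev_even|rewrite ev_odd]; auto.
Qed.

Lemma ev_map (h : C -> C) u : h (RtoC 0) = RtoC 0 ->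
  (fun n => h (ev u n)) = ev (fun k => h (u k)).
Proof. intros H0. apply ev_eq; intros k; [rewrite ev_even|rewrite ev_odd]; auto. Qed.

Lemma ev_map2 (h : C -> C -> C) u w : h (RtoC 0) (RtoC 0) = RtoC 0 ->
  (fun n => h (ev u n) (ev w n)) = ev (fun k => h (u k) (w k)).
Proof. intros H0. apply ev_eq; intros k; [rewrite !ev_even|rewrite !ev_odd]; auto. Qed.

Lemma csum_zero K : csum (fun _ => RtoC 0) K = RtoC 0.
Proof. induction K as [|K IH]; simpl; auto. rewrite IH. ring. Qed.

Lemma csum_succ a K : csum a (S K) = (csum a K + a K)%C.
Proof. reflexivity. Qed.

Lemma csum_ext a b K : (forall k, a k = b k) -> csum a K = csum b K.
Proof. intros Hab; induction K as [|K IH]; simpl; auto. rewrite IH, Hab. reflexivity. Qed.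

Lemma ev_csum (c : nat -> C) (w : nat -> nat -> C) K :
  (fun n => csum (fun j => c j * ev (w j) n)%C K) = ev (fun k => csum (fun j => c j * w j k)%C K).
Proof.
  apply ev_eq; intros k.
  - apply csum_ext; intros j. rewrite ev_even. reflexivity.
  - rewrite <- (csum_zero K). apply csum_ext; intros j. rewrite ev_odd. ring.
Qed.

Definition geom_bounded (u : nat -> C) : Prop :=
  exists c r, 0 <= r < 1 /\ forall k, Cmod (u k) <= c * r ^ k.

Lemma geom_bounded_lin a b u w : geom_bounded u -> geom_bounded w ->
  geom_bounded (fun k => a * u k + b * w k)%C.
Proof.
  intros (c1 & r1 & Hr1 & H1) (c2 & r2 & Hr2 & H2).
  set (r := Rmax r1 r2).
  exists (Cmod a * Rmax c1 0 + Cmod b * Rmax c2 0), r. split; [apply Rmax_in_unit; auto|].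
  intros k. eapply Rle_trans; [apply Cmod_triangle|]. rewrite !Cmod_mult.
  pose proof (Cmod_ge_0 a); pose proof (Cmod_ge_0 b).
  assert (Hle : forall c q, 0 <= q <= r -> c * q ^ k <= Rmax c 0 * r ^ k).
  { intros c q Hq. apply Rle_trans with (Rmax c 0 * q ^ k).
    - apply Rmult_le_compat_r; [apply pow_le; lra|apply Rmax_l].
    - apply Rmult_le_compat_l; [apply Rmax_r|apply pow_incr; lra]. }
  pose proof (Hle c1 r1 ltac:(split; [lra|apply Rmax_l])).
  pose proof (Hle c2 r2 ltac:(split; [lra|apply Rmax_r])).
  specialize (H1 k). specialize (H2 k). nra.
Qed.

Lemma geom_bounded_scal a u : geom_bounded u -> geom_bounded (fun k => a * u k)%C.
Proof.
  intros Hu. replace (fun k => a * u k)%C with (fun k => a * u k + 0 * u k)%C.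
  - apply geom_bounded_lin; auto.
  - apply functional_extensionality; intros k. ring.
Qed.

Lemma l2_ev_le u c r : 0 <= r < 1 -> (forall k, Cmod (u k) <= c * r ^ k) ->
  l2 (ev u) /\ l2norm2 (ev u) <= c ^ 2 / (1 - r).
Proof.
  intros Hr Hu. apply Series_le_geom; auto. intros n.
  split; [apply pow_le, Cmod_ge_0|].
  destruct (even_or_odd n) as [[k ->]|[k ->]].
  - rewrite ev_even. specialize (Hu k). pose proof (Cmod_ge_0 (u k)).
    replace (2 * k)%nat with (k + k)%nat by lia. rewrite pow_add.
    pose proof (pow_le r k ltac:(lra)). nra.
  - rewrite ev_odd, Cmod_0. replace (0 ^ 2) with 0 by ring.
    apply Rmult_le_pos; [nra|apply pow_le; lra].
Qed.

Lemma geom_bounded_l2 u : geom_bounded u -> l2 (ev u).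
Proof. intros (c & r & Hr & H). apply (l2_ev_le u c r Hr H). Qed.

Lemma l2norm2_nonneg x : l2 x -> 0 <= l2norm2 x.
Proof. intros H. apply Series_nonneg; auto. intros; apply pow_le, Cmod_ge_0. Qed.

Lemma l2_coord_le x n : l2 x -> Cmod (x n) ^ 2 <= l2norm2 x.
Proof. intros H. apply (Series_term_le (fun n => Cmod (x n) ^ 2)); auto. intros; apply pow_le, Cmod_ge_0. Qed.

Lemma l2conv_ev (v : nat -> nat -> C) (y : nat -> C) (E m r : R) :
  0 <= m < 1 -> 0 <= r < 1 ->
  (forall K k, Cmod (v K k - y k) <= E * m ^ K * r ^ k) ->
  (forall K, geom_bounded (v K)) -> geom_bounded y ->
  l2conv (fun K => ev (v K)) (ev y).
Proof.
  intros Hm Hr Hclose Hv Hy.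
  split; [apply geom_bounded_l2; auto|split; [intros; apply geom_bounded_l2; auto|]].
  apply is_lim_seq_le_le with (u := fun _ => 0) (w := fun K => (E ^ 2 / (1 - r)) * (m ^ 2) ^ K).
  - intros K. rewrite (ev_map2 Cminus) by ring.
    destruct (l2_ev_le (fun k => v K k - y k)%C (E * m ^ K) r Hr (Hclose K)) as [Hl Hle].
    split; [apply l2norm2_nonneg; auto|].
    eapply Rle_trans; [apply Hle|]. rewrite <- pow_mult, Nat.mul_comm, pow_mult.
    right. unfold Rdiv. ring.
  - apply is_lim_seq_const.
  - apply is_lim_seq_geom_scal. split; [apply pow_le; lra|nra].
Qed.

Lemma Cmod_sub_sq_le a b : Cmod (a - b) ^ 2 <= 2 * Cmod a ^ 2 + 2 * Cmod b ^ 2.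
Proof.
  assert (Htri : Cmod (a - b) <= Cmod a + Cmod b).
  { unfold Cminus. rewrite <- (Cmod_opp b). apply Cmod_triangle. }
  pose proof (Cmod_ge_0 (a - b)). pose proof (Cmod_ge_0 a). pose proof (Cmod_ge_0 b).
  pose proof (pow2_ge_0 (Cmod a - Cmod b)).
  assert (Cmod (a - b) * Cmod (a - b) <= (Cmod a + Cmod b) * (Cmod a + Cmod b))
    by (apply Rmult_le_compat; lra).
  nra.
Qed.

Lemma l2_sub x y : l2 x -> l2 y -> l2 (fun n => x n - y n)%C.
Proof.
  intros Hx Hy.
  apply (@ex_series_le R_AbsRing R_CompleteNormedModule _
           (fun n => 2 * Cmod (x n) ^ 2 + 2 * Cmod (y n) ^ 2)).
  - intros n. change (norm ?z) with (Rabs z).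
    rewrite Rabs_pos_eq; [apply Cmod_sub_sq_le|apply pow_le, Cmod_ge_0].
  - apply (ex_series_ext (fun n => plus (scal 2 (Cmod (x n) ^ 2)) (scal 2 (Cmod (y n) ^ 2))));
      [reflexivity|].
    apply (@ex_series_plus R_AbsRing R_NormedModule);
      apply (@ex_series_scal_l R_AbsRing R_NormedModule); auto.
Qed.

Lemma l2conv_unique v y y' : l2conv v y -> l2conv v y' -> y = y'.
Proof.
  intros (Hy & Hv & Hlim) (Hy' & _ & Hlim'). apply functional_extensionality; intros n.
  assert (Hle : Rbar_le (Cmod (y n - y' n) ^ 2) 0).
  { apply is_lim_seq_le with
      (u := fun _ => Cmod (y n - y' n) ^ 2)
      (v := fun K => 2 * l2norm2 (fun n => v K n - y' n)%C + 2 * l2norm2 (fun n => v K n - y n)%C).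
    - intros K.
      pose proof (l2_coord_le _ n (l2_sub _ _ (Hv K) Hy)).
      pose proof (l2_coord_le _ n (l2_sub _ _ (Hv K) Hy')).
      replace (y n - y' n)%C with ((v K n - y' n) - (v K n - y n))%C by ring.
      pose proof (Cmod_sub_sq_le (v K n - y' n) (v K n - y n)). lra.
    - apply is_lim_seq_const.
    - replace (Finite 0) with (Finite (2 * 0 + 2 * 0)) by (f_equal; ring).
      apply is_lim_seq_plus';
        replace (Finite (2 * 0)) with (Rbar_mult 2 0) by reflexivity;
        apply is_lim_seq_scal_l; auto. }
  simpl in Hle. pose proof (pow_le (Cmod (y n - y' n)) 2 (Cmod_ge_0 _)).
  assert (Hz : Cmod (y n - y' n) = 0) by nra.
  apply Cmod_eq_0 in Hz.
  replace (y n) with ((y n - y' n) + y' n)%C by ring. rewrite Hz. ring.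
Qed.

(** Actions of [f_N L^{*2}], [g_(N+2) L^2], [1 - g_(N+2) L^2] and [N] on the coefficient
    sequence [u] of [ev u]. *)
Definition A_seq (f : nat -> C) (u : nat -> C) : nat -> C :=
  fun k => match k with O => RtoC 0 | S k' => (f (2 * S k')%nat * u k')%C end.

Definition G_seq (g : nat -> C) (u : nat -> C) : nat -> C :=
  fun k => (g (2 * k + 2)%nat * u (S k))%C.

Definition T_seq (g : nat -> C) (u : nat -> C) : nat -> C :=
  fun k => (u k - G_seq g u k)%C.

Definition N_seq (u : nat -> C) : nat -> C :=
  fun k => (INR (2 * k) * u k)%C.

Definition Tpow (g : nat -> C) (k : nat) (u : nat -> C) : nat -> C :=
  Nat.iter k (T_seq g) u.

Lemma fNLs2_ev f u : l2 (ev u) -> l2 (ev (A_seq f u)) -> fNLs2 f (ev u) (ev (A_seq f u)).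
Proof.
  intros Hu HAu. split; [auto|split; [auto|]].
  symmetry. apply ev_eq; intros k.
  - destruct k as [|k]; [reflexivity|].
    replace (2 * S k)%nat with (S (S (2 * k))) at 1 by lia.
    rewrite ev_even. reflexivity.
  - destruct k as [|k]; [reflexivity|].
    replace (S (2 * S k)) with (S (S (S (2 * k)))) by lia.
    replace (2 * S k)%nat with (S (S (2 * k))) by lia. cbv iota.
    rewrite ev_odd. ring.
Qed.

Lemma gN2L2_ev g u : l2 (ev u) -> l2 (ev (G_seq g u)) -> gN2L2 g (ev u) (ev (G_seq g u)).
Proof.
  intros Hu HGu. split; [auto|split; [auto|]].
  symmetry. apply ev_eq; intros k.
  - replace (2 * k + 2)%nat with (2 * S k)%nat at 2 by lia. rewrite ev_even. reflexivity.
  - replace (S (2 * k) + 2)%nat with (S (2 * S k)) by lia. rewrite ev_odd. ring.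
Qed.

Lemma N_op_ev u : l2 (ev u) -> l2 (ev (N_seq u)) -> N_op (ev u) (ev (N_seq u)).
Proof.
  intros Hu HNu. split; [auto|split; [auto|]].
  symmetry. apply ev_eq; intros k; [rewrite ev_even|rewrite ev_odd; ring]. reflexivity.
Qed.

Lemma one_minus_ev g u : l2 (ev u) -> l2 (ev (G_seq g u)) ->
  one_minus (gN2L2 g) (ev u) (ev (T_seq g u)).
Proof.
  intros Hu HGu. exists (ev (G_seq g u)). split; [apply gN2L2_ev; auto|].
  rewrite (ev_map2 Cminus) by ring. reflexivity.
Qed.

Definition functional (A : Op) : Prop := forall x y y', A x y -> A x y' -> y = y'.

Lemma fNLs2_functional f : functional (fNLs2 f).
Proof. intros x y y' (_ & _ & H) (_ & _ & H'). congruence. Qed.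

Lemma scale_functional c A : functional A -> functional (scale c A).
Proof. intros HA x y y' (z & Hz & ->) (z' & Hz' & ->). rewrite (HA _ _ _ Hz Hz'). reflexivity. Qed.

Lemma opow_functional A : functional A -> forall k, functional (opow A k).
Proof.
  intros HA k; induction k as [|k IH]; simpl.
  - intros x y y' (_ & ->) (_ & ->). reflexivity.
  - intros x y y' (w & Hw & H) (w' & Hw' & H').
    rewrite (IH _ _ _ Hw Hw') in H. eapply HA; eauto.
Qed.

(** * Commutators with powers of [T] *)

Section IteratedCommutator.
Variables (T X K : (nat -> C) -> nat -> C).
Hypothesis T_lin : forall a b u w,
  T (fun n => a * u n + b * w n)%C = (fun n => a * T u n + b * T w n)%C.
Hypothesis TX : forall u, T (X u) = (fun n => X (T u) n + K u n)%C.
Hypothesis TK : forall u, T (K u) = K (T u).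

Lemma iter_commutator k u :
  Nat.iter k T (X u) = (fun n => X (Nat.iter k T u) n + INR k * K (Nat.iter (pred k) T u) n)%C.
Proof.
  induction k as [|k IH]; simpl Nat.iter.
  - apply functional_extensionality; intros n. simpl. ring.
  - rewrite IH.
    replace (fun n => X (Nat.iter k T u) n + INR k * K (Nat.iter (pred k) T u) n)%C
      with (fun n => 1 * X (Nat.iter k T u) n + INR k * K (Nat.iter (pred k) T u) n)%C
      by (apply functional_extensionality; intros; ring).
    rewrite T_lin, TX, TK. apply functional_extensionality; intros n.
    rewrite S_INR, RtoC_plus.
    destruct k as [|k]; simpl; ring.
Qed.
End IteratedCommutator.

Lemma T_seq_lin g a b u w :
  T_seq g (fun n => a * u n + b * w n)%C = (fun n => a * T_seq g u n + b * T_seq g w n)%C.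
Proof. apply functional_extensionality; intros k. unfold T_seq, G_seq. ring. Qed.

Lemma Tpow_lin g k a b u w :
  Tpow g k (fun n => a * u n + b * w n)%C = (fun n => a * Tpow g k u n + b * Tpow g k w n)%C.
Proof.
  induction k as [|k IH]; [reflexivity|].
  unfold Tpow in *; simpl Nat.iter. rewrite IH. apply T_seq_lin.
Qed.

Lemma Tpow_N g k u :
  Tpow g k (N_seq u) =
  (fun n => N_seq (Tpow g k u) n + INR k * (-2 * G_seq g (Tpow g (pred k) u) n))%C.
Proof.
  apply (iter_commutator (T_seq g) N_seq (fun w n => -2 * G_seq g w n)%C (T_seq_lin g)).
  - intros w. apply functional_extensionality; intros k'.
    unfold T_seq, N_seq, G_seq.
    replace (2 * S k')%nat with (2 * k' + 2)%nat by lia.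
    rewrite plus_INR, RtoC_plus. replace (INR 2) with 2 by reflexivity. ring.
  - intros w. apply functional_extensionality; intros k'. unfold T_seq, G_seq. ring.
Qed.

Section RaisingOperator.
Variables (f g : nat -> C) (beta : C).
Hypothesis Hgf : forall k, (g (2 * k + 2)%nat * f (2 * k + 2)%nat = (INR k + 1) * beta)%C.

Lemma T_A_commutator u : T_seq g (A_seq f u) = (fun n => A_seq f (T_seq g u) n + - beta * u n)%C.
Proof.
  apply functional_extensionality; intros k. unfold T_seq, G_seq.
  destruct k as [|m]; unfold A_seq; cbv beta iota.
  - pose proof (Hgf 0) as H0. simpl in H0 |- *.
    replace beta with (g 2%nat * f 2%nat)%C by (rewrite H0; ring). ring.
  - replace (f (2 * S (S m))%nat) with (f (2 * S m + 2)%nat) by (f_equal; lia).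
    replace (f (2 * S m)%nat) with (f (2 * m + 2)%nat) by (f_equal; lia).
    replace beta with (g (2 * S m + 2)%nat * f (2 * S m + 2)%nat
                       - g (2 * m + 2)%nat * f (2 * m + 2)%nat)%C
      by (rewrite !Hgf, S_INR, RtoC_plus; ring).
    ring.
Qed.

Lemma Tpow_A k u :
  Tpow g k (A_seq f u) = (fun n => A_seq f (Tpow g k u) n + INR k * (- beta * Tpow g (pred k) u n))%C.
Proof.
  apply (iter_commutator (T_seq g) (A_seq f) (fun w n => - beta * w n)%C (T_seq_lin g)).
  - exact T_A_commutator.
  - intros w. apply functional_extensionality; intros k'. unfold T_seq, G_seq. ring.
Qed.
End RaisingOperator.

(** * Doubly geometric decay *)

Definition dgeom (w : nat -> nat -> C) : Prop :=
  exists v r D, 0 <= v < 1 /\ 0 <= r < 1 /\ 0 <= D /\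
    forall k n, Cmod (w k n) <= D * v ^ k * r ^ n.

(** The decay that makes the logarithmic series converge, coordinatewise and in [l2]. *)
Definition Tdecay (g : nat -> C) (u : nat -> C) : Prop := dgeom (fun k => Tpow g k u).

Lemma geom2_le D v v' r r' k n : 0 <= D -> 0 <= v <= v' -> 0 <= r <= r' ->
  D * v ^ k * r ^ n <= D * v' ^ k * r' ^ n.
Proof.
  intros HD Hv Hr. pose proof (pow_incr v v' k Hv). pose proof (pow_incr r r' n Hr).
  pose proof (pow_le v k ltac:(lra)). pose proof (pow_le r n ltac:(lra)).
  apply Rmult_le_compat; [|apply pow_le; lra|apply Rmult_le_compat_l|]; nra.
Qed.

Lemma dgeom_lin a b w1 w2 : dgeom w1 -> dgeom w2 ->
  dgeom (fun k n => a * w1 k n + b * w2 k n)%C.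
Proof.
  intros (v1 & r1 & D1 & Hv1 & Hr1 & HD1 & H1) (v2 & r2 & D2 & Hv2 & Hr2 & HD2 & H2).
  set (v := Rmax v1 v2). set (r := Rmax r1 r2).
  exists v, r, (Cmod a * D1 + Cmod b * D2).
  pose proof (Cmod_ge_0 a); pose proof (Cmod_ge_0 b).
  split; [apply Rmax_in_unit; auto|split; [apply Rmax_in_unit; auto|split; [nra|]]].
  intros k n. eapply Rle_trans; [apply Cmod_triangle|]. rewrite !Cmod_mult.
  assert (E1 : Cmod (w1 k n) <= D1 * v ^ k * r ^ n).
  { eapply Rle_trans; [apply H1|apply geom2_le; [lra|split; [lra|apply Rmax_l]|split; [lra|apply Rmax_l]]]. }
  assert (E2 : Cmod (w2 k n) <= D2 * v ^ k * r ^ n).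
  { eapply Rle_trans; [apply H2|apply geom2_le; [lra|split; [lra|apply Rmax_r]|split; [lra|apply Rmax_r]]]. }
  apply Rle_trans with (Cmod a * (D1 * v ^ k * r ^ n) + Cmod b * (D2 * v ^ k * r ^ n));
    [apply Rplus_le_compat; apply Rmult_le_compat_l; auto|right; ring].
Qed.

Lemma Tdecay_lin g a b u w : Tdecay g u -> Tdecay g w -> Tdecay g (fun n => a * u n + b * w n)%C.
Proof.
  intros Hu Hw. unfold Tdecay.
  replace (fun k => Tpow g k (fun n => a * u n + b * w n)%C)
    with (fun k n => a * Tpow g k u n + b * Tpow g k w n)%C.
  - apply dgeom_lin; auto.
  - apply functional_extensionality; intros k. rewrite Tpow_lin. reflexivity.
Qed.

Lemma Tdecay_zero g : Tdecay g (fun _ => RtoC 0).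
Proof.
  assert (H0 : forall k, Tpow g k (fun _ => RtoC 0) = fun _ => RtoC 0).
  { induction k as [|k IH]; [reflexivity|]. unfold Tpow in *; simpl Nat.iter. rewrite IH.
    apply functional_extensionality; intros n. unfold T_seq, G_seq. ring. }
  exists 0, 0, 0. split; [lra|split; [lra|split; [lra|]]].
  intros k n. rewrite H0, Cmod_0, !Rmult_0_l. lra.
Qed.

Lemma Tpow_add g j k u : Tpow g k (Tpow g j u) = Tpow g (k + j) u.
Proof. unfold Tpow. rewrite Nat.iter_add. reflexivity. Qed.

Lemma Tdecay_Tpow g j u : Tdecay g u -> Tdecay g (Tpow g j u).
Proof.
  intros (v & r & D & Hv & Hr & HD & H). exists v, r, (D * v ^ j).
  split; [auto|split; [auto|split; [apply Rmult_le_pos; [lra|apply pow_le; lra]|]]].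
  intros k n. rewrite Tpow_add. eapply Rle_trans; [apply H|]. rewrite pow_add. right; ring.
Qed.

Lemma Tdecay_G g u : Tdecay g u -> Tdecay g (G_seq g u).
Proof.
  intros Hu.
  replace (G_seq g u) with (fun n => 1 * u n + (-1) * Tpow g 1 u n)%C.
  - apply Tdecay_lin; [|apply Tdecay_Tpow]; auto.
  - apply functional_extensionality; intros n. unfold Tpow, T_seq; simpl. ring.
Qed.

Lemma geom_bounded_Tpow g u k : Tdecay g u -> geom_bounded (Tpow g k u).
Proof. intros (v & r & D & Hv & Hr & HD & H). exists (D * v ^ k), r. split; auto. Qed.

Lemma Tdecay_geom_bounded g u : Tdecay g u -> geom_bounded u.
Proof. apply (geom_bounded_Tpow g u 0). Qed.

Lemma Tdecay_eigen g u z : T_seq g u = (fun n => z * u n)%C -> Cmod z < 1 ->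
  geom_bounded u -> Tdecay g u.
Proof.
  intros Heig Hz (c & r & Hr & Hb).
  assert (Hc : 0 <= c).
  { pose proof (Hb 0%nat) as H0. rewrite pow_O, Rmult_1_r in H0. pose proof (Cmod_ge_0 (u 0%nat)). lra. }
  assert (Hpow : forall k, Tpow g k u = fun n => (z ^ k * u n)%C).
  { induction k as [|k IH]; apply functional_extensionality; intros n.
    - simpl. ring.
    - unfold Tpow in *; simpl Nat.iter. rewrite IH.
      transitivity (z ^ k * T_seq g u n)%C; [unfold T_seq, G_seq; ring|].
      rewrite Heig, Cpow_S. ring. }
  exists (Cmod z), r, c. split; [split; [apply Cmod_ge_0|auto]|split; [auto|split; [auto|]]].
  intros k n. rewrite Hpow, Cmod_mult, Cmod_pow.
  pose proof (pow_le (Cmod z) k (Cmod_ge_0 z)). pose proof (Hb n).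
  apply Rle_trans with (Cmod z ^ k * (c * r ^ n)); [apply Rmult_le_compat_l; auto|right; ring].
Qed.

(** Weights absorbing one linear factor and one index shift; [N] and [f_N L^{*2}] cost exactly
    this much. *)
Definition pw (v : R) (k : nat) : R := INR (S k) * v ^ pred k.

Lemma pw_nonneg v k : 0 <= v -> 0 <= pw v k.
Proof. intros Hv. apply Rmult_le_pos; [apply pos_INR|apply pow_le; auto]. Qed.

Lemma pow_pred_le_pw v k : 0 <= v -> v ^ pred k <= pw v k.
Proof.
  intros Hv. unfold pw. rewrite S_INR. pose proof (pos_INR k).
  rewrite <- (Rmult_1_l (v ^ pred k)) at 1.
  apply Rmult_le_compat_r; [apply pow_le|]; lra.
Qed.

Lemma pow_le_pw v k : 0 <= v <= 1 -> v ^ k <= pw v k.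
Proof.
  intros Hv. apply Rle_trans with (v ^ pred k); [apply pow_antitone; [auto|lia]|].
  apply pow_pred_le_pw; lra.
Qed.

Lemma mul_pow_pred_le_pw v k : 0 <= v -> INR k * v ^ pred k <= pw v k.
Proof.
  intros Hv. unfold pw. rewrite S_INR.
  apply Rmult_le_compat_r; [apply pow_le|]; lra.
Qed.

Lemma succ_mul_pow_le q n : 0 <= q < 1 -> INR (S n) * q ^ n <= / (1 - q).
Proof.
  intros Hq.
  assert (Hgeom : forall m, rsum (fun k => q ^ k) m * (1 - q) = 1 - q ^ m).
  { induction m as [|m IH]; simpl; [ring|]. rewrite Rmult_plus_distr_r, IH. ring. }
  assert (Hm : forall m, (m <= S n)%nat -> INR m * q ^ n <= rsum (fun k => q ^ k) m).
  { induction m as [|m IH]; intros Hm; simpl rsum; [simpl; lra|].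
    rewrite S_INR. pose proof (pow_antitone q m n ltac:(lra) ltac:(lia)).
    specialize (IH ltac:(lia)). lra. }
  eapply Rle_trans; [apply (Hm (S n)); lia|].
  apply (Rmult_le_reg_r (1 - q)); [lra|]. rewrite Hgeom, Rinv_l by lra.
  pose proof (pow_le q (S n) ltac:(lra)). lra.
Qed.

Lemma pw_le_geom v : 0 <= v < 1 ->
  exists c v1, 0 <= c /\ 0 <= v1 < 1 /\ forall k, pw v k <= c * v1 ^ k.
Proof.
  intros Hv. set (v1 := (1 + v) / 2). set (q := v / v1).
  assert (Hv1 : 1 / 2 <= v1 < 1 /\ v < v1) by (unfold v1; lra).
  assert (Hq : 0 <= q < 1).
  { unfold q; split; [apply Rdiv_le_0_compat; lra|].
    apply Rmult_lt_reg_r with v1; [lra|]. unfold Rdiv. rewrite Rmult_assoc, Rinv_l; lra. }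
  assert (Hc : 2 <= 2 / ((1 - q) * v1)).
  { apply Rmult_le_reg_r with ((1 - q) * v1); [nra|].
    unfold Rdiv. rewrite Rmult_assoc, Rinv_l by nra. nra. }
  exists (2 / ((1 - q) * v1)), v1. split; [lra|split; [lra|]].
  intros [|j]; unfold pw; simpl pred.
  - simpl. lra.
  - assert (Hv_eq : v = q * v1) by (unfold q; field; lra).
    pose proof (succ_mul_pow_le q j Hq). pose proof (pow_le q j ltac:(lra)).
    pose proof (pow_le v1 j ltac:(lra)).
    rewrite Hv_eq, Rpow_mult_distr, !S_INR. rewrite S_INR in H. simpl pow.
    apply Rle_trans with (2 * (INR j + 1) * (q ^ j * v1 ^ j)).
    { apply Rmult_le_compat_r; [nra|pose proof (pos_INR j); lra]. }
    apply Rle_trans with (2 * / (1 - q) * v1 ^ j).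
    { replace (2 * (INR j + 1) * (q ^ j * v1 ^ j)) with (2 * ((INR j + 1) * q ^ j) * v1 ^ j)
        by ring.
      apply Rmult_le_compat_r; lra. }
    right. field. lra.
Qed.

Lemma dgeom_of_pw_bound w D v r : 0 <= D -> 0 <= v < 1 -> 0 <= r < 1 ->
  (forall k n, Cmod (w k n) <= D * pw v k * pw r n) -> dgeom w.
Proof.
  intros HD Hv Hr Hw.
  destruct (pw_le_geom v Hv) as (c1 & v1 & Hc1 & Hv1 & Hpv).
  destruct (pw_le_geom r Hr) as (c2 & r1 & Hc2 & Hr1 & Hpr).
  exists v1, r1, (D * c1 * c2). split; [auto|split; [auto|split; [apply Rmult_le_pos; nra|]]].
  intros k n. eapply Rle_trans; [apply Hw|].
  pose proof (pw_nonneg v k ltac:(lra)). pose proof (pw_nonneg r n ltac:(lra)).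
  apply Rle_trans with (D * (c1 * v1 ^ k) * (c2 * r1 ^ n)); [|right; ring].
  apply Rmult_le_compat; [nra|auto|apply Rmult_le_compat_l|]; auto.
Qed.

Lemma mul_pred_le_pw D v r k n x : 0 <= D -> 0 <= v -> 0 <= r <= 1 ->
  x <= D * v ^ pred k * r ^ n -> INR k * x <= D * pw v k * pw r n.
Proof.
  intros HD Hv Hr Hx. pose proof (pos_INR k).
  pose proof (mul_pow_pred_le_pw v k Hv). pose proof (pow_le_pw r n Hr).
  pose proof (pow_le r n ltac:(lra)). pose proof (pow_le v (pred k) Hv).
  apply Rle_trans with (D * (INR k * v ^ pred k) * r ^ n).
  { replace (D * (INR k * v ^ pred k) * r ^ n) with (INR k * (D * v ^ pred k * r ^ n)) by ring.
    apply Rmult_le_compat_l; auto. }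
  apply Rmult_le_compat; [apply Rmult_le_pos; [|apply Rmult_le_pos]|auto|apply Rmult_le_compat_l|];
    auto.
Qed.

Section DecayBounds.
Variables (g u : nat -> C) (v r D : R).
Hypotheses (Hv : 0 <= v < 1) (Hr : 0 <= r < 1) (HD : 0 <= D)
  (Hu : forall k n, Cmod (Tpow g k u n) <= D * v ^ k * r ^ n).

Lemma G_Tpow_bound j n : Cmod (G_seq g (Tpow g j u) n) <= 2 * D * v ^ j * r ^ n.
Proof.
  replace (G_seq g (Tpow g j u) n) with (Tpow g j u n - Tpow g (S j) u n)%C
    by (unfold Tpow, T_seq; simpl; ring).
  unfold Cminus. eapply Rle_trans; [apply Cmod_triangle|]. rewrite Cmod_opp.
  pose proof (Hu j n). pose proof (Hu (S j) n).
  assert (D * v ^ S j * r ^ n <= D * v ^ j * r ^ n).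
  { apply Rmult_le_compat_r; [apply pow_le; lra|].
    apply Rmult_le_compat_l; [auto|apply pow_antitone; lra || lia]. }
  lra.
Qed.

Lemma N_Tpow_bound k n : Cmod (N_seq (Tpow g k u) n) <= 2 * D * pw v k * pw r n.
Proof.
  unfold N_seq. rewrite Cmod_mult, Cmod_R, Rabs_pos_eq, mult_INR by apply pos_INR.
  replace (INR 2) with 2 by reflexivity.
  pose proof (Hu k n). pose proof (pos_INR n). pose proof (pow_le_pw v k ltac:(lra)).
  pose proof (pow_le v k ltac:(lra)). pose proof (pow_le r n ltac:(lra)).
  assert (Hn : INR n * r ^ n <= pw r n).
  { eapply Rle_trans; [|apply mul_pow_pred_le_pw; lra].
    apply Rmult_le_compat_l; [auto|apply pow_antitone; lra || lia]. }
  apply Rle_trans with (2 * D * v ^ k * (INR n * r ^ n)); [nra|].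
  apply Rmult_le_compat; [nra|nra|apply Rmult_le_compat_l; nra|auto].
Qed.

Lemma A_Tpow_bound f Cf k n : 0 <= Cf ->
  (forall m, Cmod (f (2 * S m)%nat) <= Cf * INR (S m)) ->
  Cmod (A_seq f (Tpow g k u) n) <= Cf * D * pw v k * pw r n.
Proof.
  intros HCf Hf. pose proof (pw_nonneg v k ltac:(lra)). pose proof (pw_nonneg r n ltac:(lra)).
  destruct n as [|m]; unfold A_seq; cbv beta iota.
  - rewrite Cmod_0. apply Rmult_le_pos; [apply Rmult_le_pos; [nra|]|]; auto.
  - rewrite Cmod_mult. pose proof (Hf m). pose proof (Hu k m).
    pose proof (Cmod_ge_0 (f (2 * S m)%nat)). pose proof (Cmod_ge_0 (Tpow g k u m)).
    pose proof (pow_le_pw v k ltac:(lra)). pose proof (pow_le v k ltac:(lra)).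
    pose proof (pow_le r m ltac:(lra)). pose proof (pos_INR (S m)).
    assert (Hm : INR (S m) * r ^ m <= pw r (S m)).
    { unfold pw. simpl pred. apply Rmult_le_compat_r; [auto|rewrite !S_INR; lra]. }
    apply Rle_trans with ((Cf * INR (S m)) * (D * v ^ k * r ^ m)); [apply Rmult_le_compat; lra|].
    apply Rle_trans with (Cf * D * v ^ k * (INR (S m) * r ^ m)); [right; ring|].
    apply Rmult_le_compat; [apply Rmult_le_pos; [nra|]|apply Rmult_le_pos|
                            apply Rmult_le_compat_l; [nra|]|]; auto.
Qed.
End DecayBounds.

Lemma Tdecay_N g u : Tdecay g u -> Tdecay g (N_seq u).
Proof.
  intros (v & r & D & Hv & Hr & HD & Hu).
  apply (dgeom_of_pw_bound _ (6 * D) v r); [lra|auto|auto|].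
  intros k n. rewrite Tpow_N. eapply Rle_trans; [apply Cmod_triangle|].
  rewrite (Cmod_mult (INR k)), Cmod_mult, Cmod_R, Rabs_pos_eq by apply pos_INR.
  replace (Cmod (-2)%C) with 2 by (rewrite Cmod_R, Rabs_left; lra).
  pose proof (N_Tpow_bound g u v r D Hv Hr HD Hu k n).
  pose proof (mul_pred_le_pw (2 * D) v r k n _ ltac:(lra) ltac:(lra) ltac:(lra)
                (G_Tpow_bound g u v r D Hv Hr HD Hu (pred k) n)).
  lra.
Qed.

Lemma Tdecay_A f g beta Cf :
  (forall k, (g (2 * k + 2)%nat * f (2 * k + 2)%nat = (INR k + 1) * beta)%C) ->
  0 <= Cf -> (forall m, Cmod (f (2 * S m)%nat) <= Cf * INR (S m)) ->
  forall u, Tdecay g u -> Tdecay g (A_seq f u).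
Proof.
  intros Hgf HCf Hf u (v & r & D & Hv & Hr & HD & Hu).
  pose proof (Cmod_ge_0 beta).
  apply (dgeom_of_pw_bound _ ((Cf + Cmod beta) * D) v r); [nra|auto|auto|].
  intros k n. rewrite (Tpow_A f g beta Hgf). eapply Rle_trans; [apply Cmod_triangle|].
  rewrite !Cmod_mult, Cmod_R, Rabs_pos_eq, Cmod_opp by apply pos_INR.
  pose proof (A_Tpow_bound g u v r D Hv Hr HD Hu f Cf k n HCf Hf).
  assert (Hb : Cmod beta * Cmod (Tpow g (pred k) u n) <= Cmod beta * D * v ^ pred k * r ^ n).
  { rewrite !Rmult_assoc. apply Rmult_le_compat_l; [auto|]. rewrite <- Rmult_assoc. apply Hu. }
  pose proof (mul_pred_le_pw (Cmod beta * D) v r k n _ ltac:(nra) ltac:(lra) ltac:(lra) Hb).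
  lra.
Qed.

(** * The logarithm of [g_(N+2) L^2] on decaying vectors *)

Definition geom_conv (s : nat -> C) (l : C) : Prop :=
  exists E q, 0 <= q < 1 /\ forall K, Cmod (s K - l) <= E * q ^ K.

Lemma geom_conv_const c : geom_conv (fun _ => c) c.
Proof.
  exists 0, 0. split; [lra|]. intros K.
  replace (c - c)%C with (RtoC 0) by ring. rewrite Cmod_0. lra.
Qed.

Lemma geom_conv_lin a b s t l m : geom_conv s l -> geom_conv t m ->
  geom_conv (fun K => a * s K + b * t K)%C (a * l + b * m)%C.
Proof.
  intros (E1 & q1 & Hq1 & H1) (E2 & q2 & Hq2 & H2).
  set (q := Rmax q1 q2).
  assert (HE : forall E q' x, 0 <= q' <= q -> (forall K, Cmod (x K) <= E * q' ^ K) ->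
                 forall K, Cmod (x K) <= Rmax E 0 * q ^ K).
  { intros E q' x Hq' Hx K. eapply Rle_trans; [apply Hx|].
    apply Rmult_le_compat; [|apply pow_le; lra|apply Rmax_l|apply pow_incr; lra].
    pose proof (Hx 0%nat). pose proof (Cmod_ge_0 (x 0%nat)). simpl in *. lra. }
  assert (Hq : 0 <= q < 1) by (apply Rmax_in_unit; auto).
  specialize (HE E1 q1 _ ltac:(split; [lra|apply Rmax_l]) H1) as H1'.
  specialize (HE E2 q2 _ ltac:(split; [lra|apply Rmax_r]) H2) as H2'.
  exists (Cmod a * Rmax E1 0 + Cmod b * Rmax E2 0), q. split; [auto|]. intros K.
  replace (a * s K + b * t K - (a * l + b * m))%C with (a * (s K - l) + b * (t K - m))%C by ring.
  eapply Rle_trans; [apply Cmod_triangle|]. rewrite !Cmod_mult.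
  pose proof (Cmod_ge_0 a). pose proof (Cmod_ge_0 b).
  apply Rle_trans with (Cmod a * (Rmax E1 0 * q ^ K) + Cmod b * (Rmax E2 0 * q ^ K));
    [apply Rplus_le_compat; apply Rmult_le_compat_l; auto|right; ring].
Qed.

Lemma geom_conv_unique s l m : geom_conv s l -> geom_conv s m -> l = m.
Proof.
  intros (E1 & q1 & Hq1 & H1) (E2 & q2 & Hq2 & H2).
  set (q := Rmax q1 q2).
  assert (Hq : 0 <= q < 1) by (apply Rmax_in_unit; auto).
  assert (Hle : Cmod (l - m) <= 0).
  { apply (le_0_of_le_geom _ (Rabs E1 + Rabs E2) q Hq). intros K.
    replace (l - m)%C with ((s K - m) - (s K - l))%C by ring.
    unfold Cminus at 1. eapply Rle_trans; [apply Cmod_triangle|]. rewrite Cmod_opp.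
    pose proof (H1 K). pose proof (H2 K).
    pose proof (pow_incr q1 q K ltac:(split; [lra|apply Rmax_l])).
    pose proof (pow_incr q2 q K ltac:(split; [lra|apply Rmax_r])).
    pose proof (pow_le q1 K ltac:(lra)). pose proof (pow_le q2 K ltac:(lra)).
    pose proof (Rle_abs E1). pose proof (Rle_abs E2). pose proof (Rabs_pos E1). pose proof (Rabs_pos E2).
    assert (E1 * q1 ^ K <= Rabs E1 * q ^ K) by (apply Rle_trans with (Rabs E1 * q1 ^ K); nra).
    assert (E2 * q2 ^ K <= Rabs E2 * q ^ K) by (apply Rle_trans with (Rabs E2 * q2 ^ K); nra).
    lra. }
  pose proof (Cmod_ge_0 (l - m)).
  assert (Hz : Cmod (l - m) = 0) by lra. apply Cmod_eq_0 in Hz.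
  replace l with ((l - m) + m)%C by ring. rewrite Hz. ring.
Qed.

(** [log (1 - T) = - sum_(k>=1) T^k / k], truncated and summed coordinatewise. *)
Definition log_psum (g : nat -> C) (K : nat) (u : nat -> C) : nat -> C :=
  fun n => (- csum (fun k => / INR (S k) * Tpow g (S k) u n) K)%C.

Definition log_seq (g : nat -> C) (u : nat -> C) : nat -> C :=
  fun n => (- CSeries (fun k => / INR (S k) * Tpow g (S k) u n))%C.

Lemma INR_S_neq0 k : RtoC (INR (S k)) <> RtoC 0.
Proof. intros H. apply (not_0_INR (S k) (Nat.neq_succ_0 k)). exact (f_equal fst H). Qed.

Section LogBounds.
Variables (g u : nat -> C) (v r D : R).
Hypotheses (Hv : 0 <= v < 1) (Hr : 0 <= r < 1) (HD : 0 <= D)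
  (Hu : forall k n, Cmod (Tpow g k u n) <= D * v ^ k * r ^ n).

Lemma log_term_bound n k : Cmod (/ INR (S k) * Tpow g (S k) u n) <= (D * r ^ n) * v ^ k.
Proof.
  rewrite Cmod_mult, Cmod_inv, Cmod_R, Rabs_pos_eq by (apply pos_INR || apply INR_S_neq0).
  pose proof (Hu (S k) n). pose proof (Cmod_ge_0 (Tpow g (S k) u n)).
  assert (Hinv : / INR (S k) <= 1).
  { rewrite S_INR. pose proof (pos_INR k). rewrite <- Rinv_1. apply Rinv_le_contravar; lra. }
  pose proof (Rinv_0_lt_compat (INR (S k)) (lt_0_INR _ (Nat.lt_0_succ k))).
  assert (D * v ^ S k * r ^ n <= D * v ^ k * r ^ n).
  { apply Rmult_le_compat_r; [apply pow_le; lra|].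
    apply Rmult_le_compat_l; [auto|apply pow_antitone; lra || lia]. }
  apply Rle_trans with (1 * (D * v ^ k * r ^ n)); [apply Rmult_le_compat; lra|right; ring].
Qed.

Lemma log_psum_close K n :
  Cmod (log_psum g K u n - log_seq g u n) <= 2 * D / (1 - v) * v ^ K * r ^ n.
Proof.
  unfold log_psum, log_seq.
  replace (- csum (fun k => / INR (S k) * Tpow g (S k) u n)%C K
           - - CSeries (fun k => / INR (S k) * Tpow g (S k) u n)%C)%C
    with (- (csum (fun k => / INR (S k) * Tpow g (S k) u n)%C K
             - CSeries (fun k => / INR (S k) * Tpow g (S k) u n)%C))%C by ring.
  rewrite Cmod_opp. eapply Rle_trans; [apply (csum_CSeries_tail _ _ v Hv (log_term_bound n))|].
  right. field. lra.
Qed.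

Lemma log_seq_bound n : Cmod (log_seq g u n) <= 2 * D / (1 - v) * r ^ n.
Proof.
  pose proof (log_psum_close 0 n) as H. unfold log_psum in H. simpl csum in H.
  replace (- RtoC 0 - log_seq g u n)%C with (- log_seq g u n)%C in H by ring.
  rewrite Cmod_opp in H. simpl pow in H. lra.
Qed.

Lemma log_psum_bound K n : Cmod (log_psum g K u n) <= 4 * D / (1 - v) * r ^ n.
Proof.
  pose proof (log_psum_close K n). pose proof (log_seq_bound n).
  replace (log_psum g K u n) with ((log_psum g K u n - log_seq g u n) + log_seq g u n)%C by ring.
  eapply Rle_trans; [apply Cmod_triangle|].
  assert (0 <= 2 * D / (1 - v)) by (apply Rdiv_le_0_compat; lra).
  assert (2 * D / (1 - v) * v ^ K * r ^ n <= 2 * D / (1 - v) * r ^ n).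
  { rewrite Rmult_assoc. apply Rmult_le_compat_l; [auto|].
    pose proof (pow_le_one v K ltac:(lra)). pose proof (pow_le r n ltac:(lra)). nra. }
  replace (4 * D / (1 - v) * r ^ n) with (2 * (2 * D / (1 - v) * r ^ n)) by (field; lra).
  lra.
Qed.
End LogBounds.

Lemma opow_G g u : Tdecay g u ->
  forall k, opow (gN2L2 g) k (ev u) (ev (Nat.iter k (G_seq g) u)).
Proof.
  intros Hu.
  assert (Hdec : forall k, Tdecay g (Nat.iter k (G_seq g) u))
    by (induction k; simpl; [|apply Tdecay_G]; auto).
  induction k as [|k IH]; simpl.
  - split; [apply geom_bounded_l2, (Tdecay_geom_bounded g); auto|reflexivity].
  - exists (ev (Nat.iter k (G_seq g) u)). split; auto.
    apply gN2L2_ev; apply geom_bounded_l2, (Tdecay_geom_bounded g);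
      [|apply Tdecay_G]; auto.
Qed.

Lemma opow_one_minus g u : Tdecay g u ->
  forall k, opow (one_minus (gN2L2 g)) k (ev u) (ev (Tpow g k u)).
Proof.
  intros Hu. induction k as [|k IH]; simpl.
  - split; [apply geom_bounded_l2, (Tdecay_geom_bounded g); auto|reflexivity].
  - exists (ev (Tpow g k u)). split; auto.
    apply one_minus_ev; apply geom_bounded_l2, (Tdecay_geom_bounded g);
      [|apply Tdecay_G]; apply Tdecay_Tpow; auto.
Qed.

Lemma log_ev g u : Tdecay g u -> log_op (gN2L2 g) (ev u) (ev (log_seq g u)).
Proof.
  intros Hu. split; [intros k; eexists; apply opow_G; auto|].
  exists (fun k => ev (Tpow g k u)). split; [apply opow_one_minus; auto|].
  destruct Hu as (v & r & D & Hv & Hr & HD & H).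
  replace (fun K n => - csum (fun k => / INR (S k) * ev (Tpow g (S k) u) n) K)%C
    with (fun K => ev (log_psum g K u)).
  2: { apply functional_extensionality; intros K. unfold log_psum.
       rewrite <- (ev_map Copp) by ring.
       rewrite <- (ev_csum (fun k => / INR (S k))%C (fun k => Tpow g (S k) u)). reflexivity. }
  apply (l2conv_ev (fun K => log_psum g K u) (log_seq g u) (2 * D / (1 - v)) v r Hv Hr).
  - intros K n. apply log_psum_close; auto.
  - intros K. exists (4 * D / (1 - v)), r. split; auto. intros; apply log_psum_bound; auto.
  - exists (2 * D / (1 - v)), r. split; auto. intros; apply log_seq_bound; auto.
Qed.

(** * The commutator [[N, log(g_(N+2) L^2)]] *)

Lemma log_psum_commutator g K u n :
  (N_seq (log_psum g K u) n - log_psum g K (N_seq u) n = -2 * (u n - Tpow g K u n))%C.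
Proof.
  induction K as [|K IH].
  - unfold N_seq, log_psum. simpl. ring.
  - unfold log_psum in *. rewrite !csum_succ, (Tpow_N g (S K) u). simpl pred. cbv beta.
    unfold N_seq in *. rewrite csum_succ.
    set (c1 := csum (fun k => / INR (S k) * Tpow g (S k) u n)%C K) in *.
    set (c2 := csum (fun k => / INR (S k) * Tpow g (S k) (fun k0 => INR (2 * k0) * u k0) n)%C K)
      in *.
    transitivity ((INR (2 * n) * - c1 - - c2) + -2 * G_seq g (Tpow g K u) n)%C.
    + field. apply INR_S_neq0.
    + rewrite IH.
      change (Tpow g (S K) u n) with (Tpow g K u n - G_seq g (Tpow g K u) n)%C. ring.
Qed.

Lemma log_psum_geom_conv g u : Tdecay g u ->
  forall n, geom_conv (fun K => log_psum g K u n) (log_seq g u n).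
Proof.
  intros (v & r & D & Hv & Hr & HD & H) n. exists (2 * D / (1 - v) * r ^ n), v. split; auto.
  intros K. eapply Rle_trans; [apply (log_psum_close g u v r D); auto|right; ring].
Qed.

Lemma Tpow_geom_conv g u : Tdecay g u -> forall n, geom_conv (fun K => Tpow g K u n) (RtoC 0).
Proof.
  intros (v & r & D & Hv & Hr & HD & H) n. exists (D * r ^ n), v. split; auto.
  intros K. replace (Tpow g K u n - RtoC 0)%C with (Tpow g K u n) by ring.
  eapply Rle_trans; [apply H|right; ring].
Qed.

Lemma log_seq_commutator g u : Tdecay g u ->
  forall n, N_seq (log_seq g u) n = (log_seq g (N_seq u) n - 2 * u n)%C.
Proof.
  intros Hu n.
  assert (Hlhs : geom_conv (fun K => INR (2 * n) * log_psum g K u n + (-1) * log_psum g K (N_seq u) n)%C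
                   (INR (2 * n) * log_seq g u n + (-1) * log_seq g (N_seq u) n)%C).
  { apply geom_conv_lin; apply log_psum_geom_conv; [|apply Tdecay_N]; auto. }
  assert (Hrhs : geom_conv (fun K => (-2) * u n + 2 * Tpow g K u n)%C ((-2) * u n + 2 * 0)%C).
  { apply geom_conv_lin; [apply geom_conv_const|apply Tpow_geom_conv; auto]. }
  replace (fun K => (-2) * u n + 2 * Tpow g K u n)%C
    with (fun K => INR (2 * n) * log_psum g K u n + (-1) * log_psum g K (N_seq u) n)%C in Hrhs.
  2: { apply functional_extensionality; intros K.
       pose proof (log_psum_commutator g K u n) as HK. unfold N_seq at 1 in HK.
       transitivity (-2 * (u n - Tpow g K u n))%C; [rewrite <- HK|]; ring. }
  pose proof (geom_conv_unique _ _ _ Hlhs Hrhs) as E. unfold N_seq at 1.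
  transitivity ((INR (2 * n) * log_seq g u n + -1 * log_seq g (N_seq u) n) + log_seq g (N_seq u) n)%C;
    [ring|rewrite E; ring].
Qed.

Lemma comm_at_ev g u : Tdecay g u ->
  comm_at N_op (scale (Ci * RtoC (/ 2)) (log_op (gN2L2 g))) (ev u) (fun k => - Ci * ev u k)%C.
Proof.
  intros Hu. pose proof (Tdecay_N g u Hu) as HNu.
  set (c := (Ci * RtoC (/ 2))%C).
  assert (HNL : N_seq (fun k => c * log_seq g u k)%C =
                (fun k => c * log_seq g (N_seq u) k + (-2 * c) * u k)%C).
  { apply functional_extensionality; intros k. pose proof (log_seq_commutator g u Hu k) as E.
    unfold N_seq at 1. transitivity (c * N_seq (log_seq g u) k)%C; [unfold N_seq; ring|].
    rewrite E. ring. }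
  assert (Hlog : forall w, Tdecay g w -> geom_bounded (log_seq g w)).
  { intros w (v & r & D & Hv & Hr & HD & H).
    exists (2 * D / (1 - v)), r. split; auto. intros; apply (log_seq_bound g w v r D); auto. }
  exists (ev (fun k => c * log_seq g u k)%C), (ev (N_seq (fun k => c * log_seq g u k)%C)),
         (ev (N_seq u)), (ev (fun k => c * log_seq g (N_seq u) k)%C).
  split; [|split; [|split; [|split]]].
  - exists (ev (log_seq g u)). split; [apply log_ev; auto|].
    rewrite (ev_map (Cmult c)) by ring. reflexivity.
  - apply N_op_ev; apply geom_bounded_l2; [apply geom_bounded_scal; auto|].
    rewrite HNL. apply geom_bounded_lin; [|apply (Tdecay_geom_bounded g)]; auto.
  - apply N_op_ev; apply geom_bounded_l2, (Tdecay_geom_bounded g); auto.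
  - exists (ev (log_seq g (N_seq u))). split; [apply log_ev; auto|].
    rewrite (ev_map (Cmult c)) by ring. reflexivity.
  - rewrite (ev_map2 Cminus), (ev_map (Cmult (- Ci))) by ring. f_equal.
    apply functional_extensionality; intros k. rewrite HNL.
    assert (Hc : (-2 * c = - Ci)%C).
    { unfold c. replace (-2 * (Ci * RtoC (/ 2)))%C with (- Ci * RtoC (2 * / 2))%C
        by (rewrite RtoC_mult; ring).
      rewrite Rinv_r by lra. ring. }
    rewrite Hc. ring.
Qed.

(** * Coherent vectors *)

Lemma gf_linear (f g : nat -> C) (beta : C) :
  (forall n : nat, Nat.even n = true ->
     Cminus (Cmult (g (n + 2)%nat) (f (n + 2)%nat))
            (if Nat.leb 2 n then Cmult (g n) (f n) else RtoC 0) = beta) ->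
  forall k, (g (2 * k + 2)%nat * f (2 * k + 2)%nat = (INR k + 1) * beta)%C.
Proof.
  intros H k. induction k as [|k IH].
  - specialize (H 0%nat eq_refl). simpl in *. rewrite <- H. ring.
  - specialize (H (2 * S k)%nat (Nat.even_even _)).
    replace (Nat.leb 2 (2 * S k)) with true in H by (symmetry; apply Nat.leb_le; lia).
    replace (2 * S k)%nat with (2 * k + 2)%nat in H at 3 4 by lia.
    rewrite IH in H. rewrite S_INR, RtoC_plus.
    set (X := (g (2 * S k + 2)%nat * f (2 * S k + 2)%nat)%C) in *.
    transitivity (X - (INR k + 1) * beta + (INR k + 1) * beta)%C; [ring|rewrite H; ring].
Qed.

Fixpoint Fprod (f : nat -> C) (k : nat) : C :=
  match k with O => RtoC 1 | S k' => (Fprod f k' * f (2 * S k')%nat)%C end.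

(** Coefficients of [e^(a f_N L^{*2}) Omega] on the basis vectors [xi_(2k)]. *)
Definition coh (f : nat -> C) (a : C) (k : nat) : C :=
  (a ^ k * Fprod f k * / INR (Factorial.fact k))%C.

Lemma INR_fact_neq0 k : RtoC (INR (Factorial.fact k)) <> RtoC 0.
Proof. intros H. apply (INR_fact_neq_0 k). exact (f_equal fst H). Qed.

Lemma coh_succ f a k : coh f a (S k) = (coh f a k * a * f (2 * S k)%nat * / INR (S k))%C.
Proof.
  unfold coh. cbn [Fprod]. rewrite Cpow_S, fact_simpl, mult_INR, RtoC_mult.
  field. split; [apply INR_S_neq0|apply INR_fact_neq0].
Qed.

Lemma coh_eigen f g beta a :
  (forall k, (g (2 * k + 2)%nat * f (2 * k + 2)%nat = (INR k + 1) * beta)%C) ->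
  T_seq g (coh f a) = (fun k => (1 - a * beta) * coh f a k)%C.
Proof.
  intros Hgf. apply functional_extensionality; intros k. unfold T_seq, G_seq.
  rewrite coh_succ. replace (f (2 * S k)%nat) with (f (2 * k + 2)%nat) by (f_equal; lia).
  transitivity (coh f a k - g (2 * k + 2)%nat * f (2 * k + 2)%nat * a * coh f a k
                              * / INR (S k))%C; [ring|].
  rewrite Hgf. replace (RtoC (INR k) + 1)%C with (RtoC (INR (S k)))
    by (rewrite S_INR, RtoC_plus; reflexivity).
  field. apply INR_S_neq0.
Qed.

Lemma cross_mul_le a rho c t : 0 < rho -> 0 < c -> a / rho < t / c -> a * c <= rho * t.
Proof.
  intros Hrho Hc H.
  apply Rmult_lt_compat_r with (r := rho * c) in H; [|nra].
  replace (a / rho * (rho * c)) with (a * c) in H by (field; lra).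
  replace (t / c * (rho * c)) with (rho * t) in H by (field; lra). lra.
Qed.

Lemma eventually_ratio_lt (f : nat -> C) (Mf : Rbar)
  (Hfpos : forall n : nat, (1 <= n)%nat -> 0 < Cmod (f (2 * n)%nat))
  (HMf : is_lim_seq (fun n => INR n / Cmod (f (2 * n)%nat)) Mf) (a : R) :
  0 < a -> Rbar_lt a Mf ->
  exists rho K0, 0 < rho < 1 /\
    forall k, (K0 <= k)%nat -> a * Cmod (f (2 * S k)%nat) <= rho * INR (S k).
Proof.
  intros Ha Hlt. apply is_lim_seq_spec in HMf.
  destruct Mf as [m| |]; simpl in Hlt; [| |contradiction].
  - set (rho := (1 + a / m) / 2).
    assert (Ham : 0 < a / m < 1).
    { split; [apply Rdiv_lt_0_compat; lra|].
      apply Rmult_lt_reg_r with m; [lra|]. unfold Rdiv. rewrite Rmult_assoc, Rinv_l; lra. }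
    assert (Hrho : 0 < rho < 1) by (unfold rho; lra).
    assert (Hgap : a / rho < m).
    { apply Rmult_lt_reg_r with rho; [lra|]. unfold Rdiv. rewrite Rmult_assoc, Rinv_l by lra.
      unfold rho. replace (m * ((1 + a / m) / 2)) with ((m + a) / 2) by (field; lra). lra. }
    destruct (HMf (mkposreal (m - a / rho) ltac:(lra))) as [K0 HK0].
    exists rho, K0. split; [auto|]. intros k Hk. specialize (HK0 (S k) ltac:(lia)).
    change (Rabs (INR (S k) / Cmod (f (2 * S k)%nat) - m) < m - a / rho) in HK0.
    apply cross_mul_le; [lra|apply Hfpos; lia|]. apply Rabs_def2 in HK0. lra.
  - destruct (HMf (a / (1 / 2))) as [K0 HK0].
    exists (1 / 2), K0. split; [lra|]. intros k Hk.
    apply cross_mul_le; [lra|apply Hfpos; lia|]. apply HK0. lia.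
Qed.

Lemma geom_bound_of_eventual_ratio (a : nat -> R) rho K0 : 0 < rho -> (forall k, 0 <= a k) ->
  (forall k, (K0 <= k)%nat -> a (S k) <= rho * a k) ->
  exists c, 0 <= c /\ forall k, a k <= c * rho ^ k.
Proof.
  intros Hrho Ha H.
  set (c := rsum (fun k => a k / rho ^ k) (S K0)).
  assert (Hnn : forall k, 0 <= a k / rho ^ k).
  { intros k. apply Rdiv_le_0_compat; [auto|apply pow_lt; auto]. }
  exists c. split; [apply rsum_nonneg; auto|].
  assert (Hsmall : forall k, (k <= K0)%nat -> a k <= c * rho ^ k).
  { intros k Hk. pose proof (rsum_term_le (fun k => a k / rho ^ k) (S K0) k Hnn ltac:(lia)) as Ht.
    fold c in Ht. pose proof (pow_lt rho k Hrho).
    replace (a k) with (a k / rho ^ k * rho ^ k) by (field; lra).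
    apply Rmult_le_compat_r; lra. }
  induction k as [|k IH]; [apply Hsmall; lia|].
  destruct (Compare_dec.le_lt_dec (S k) K0); [apply Hsmall; auto|].
  eapply Rle_trans; [apply H; lia|]. simpl pow.
  apply Rle_trans with (rho * (c * rho ^ k)); [apply Rmult_le_compat_l; lra|right; ring].
Qed.

Lemma linear_bound_of_eventual (b : nat -> R) c K0 : 0 <= c -> (forall k, 0 <= b k) ->
  (forall k, (K0 <= k)%nat -> b k <= c * INR (S k)) ->
  exists C, 0 <= C /\ forall k, b k <= C * INR (S k).
Proof.
  intros Hc Hb H. pose proof (rsum_nonneg b K0 Hb).
  exists (c + rsum b K0). split; [lra|].
  intros k. assert (1 <= INR (S k)) by (rewrite S_INR; pose proof (pos_INR k); lra).
  destruct (Compare_dec.le_lt_dec K0 k) as [Hk|Hk].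
  - specialize (H k Hk). nra.
  - pose proof (rsum_term_le b K0 k Hb Hk). nra.
Qed.

Section CoherentVector.
Variables (f g : nat -> C) (beta : C) (Mf : Rbar) (alpha : C).
Hypotheses
  (Hgf : forall k, (g (2 * k + 2)%nat * f (2 * k + 2)%nat = (INR k + 1) * beta)%C)
  (Hfpos : forall n : nat, (1 <= n)%nat -> 0 < Cmod (f (2 * n)%nat))
  (HMf : is_lim_seq (fun n => INR n / Cmod (f (2 * n)%nat)) Mf)
  (Heig : Cmod (1 - alpha * beta) < 1)
  (Hrad : Rbar_lt (Cmod alpha) Mf).

Lemma alpha_pos : 0 < Cmod alpha.
Proof.
  apply Cmod_gt_0. intros E. rewrite E in Heig.
  replace (1 - 0 * beta)%C with (RtoC 1) in Heig by ring. rewrite Cmod_1 in Heig. lra.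
Qed.

Lemma f_linear_growth : exists Cf, 0 <= Cf /\ forall m, Cmod (f (2 * S m)%nat) <= Cf * INR (S m).
Proof.
  pose proof alpha_pos as Ha.
  destruct (eventually_ratio_lt f Mf Hfpos HMf _ Ha Hrad) as (rho & K0 & Hrho & HK0).
  apply (linear_bound_of_eventual _ (rho / Cmod alpha) K0);
    [apply Rdiv_le_0_compat; lra|intros; apply Cmod_ge_0|].
  intros k Hk. apply Rmult_le_reg_l with (Cmod alpha); [auto|].
  replace (Cmod alpha * (rho / Cmod alpha * INR (S k))) with (rho * INR (S k)) by (field; lra).
  auto.
Qed.

Lemma coh_geom_bound : exists c rho, 0 <= rho < 1 /\ 0 <= c /\
  forall k, Cmod (coh f alpha k) <= c * rho ^ k.
Proof.
  pose proof alpha_pos as Ha.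
  destruct (eventually_ratio_lt f Mf Hfpos HMf _ Ha Hrad) as (rho & K0 & Hrho & HK0).
  destruct (geom_bound_of_eventual_ratio (fun k => Cmod (coh f alpha k)) rho K0)
    as (c & Hc & Hb); [lra|intros; apply Cmod_ge_0| |exists c, rho; split; [lra|auto]].
  intros k Hk. rewrite coh_succ, !Cmod_mult, Cmod_inv, Cmod_R, Rabs_pos_eq
    by (apply pos_INR || apply INR_S_neq0).
  specialize (HK0 k Hk). pose proof (lt_0_INR (S k) (Nat.lt_0_succ k)).
  pose proof (Cmod_ge_0 (coh f alpha k)).
  apply Rle_trans with (Cmod (coh f alpha k) * (Cmod alpha * Cmod (f (2 * S k)%nat) / INR (S k)));
    [right; unfold Rdiv; ring|].
  rewrite (Rmult_comm rho). apply Rmult_le_compat_l; [auto|].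
  apply Rmult_le_reg_r with (INR (S k)); [auto|]. unfold Rdiv.
  rewrite Rmult_assoc, Rinv_l; lra.
Qed.

Lemma Tdecay_coh_raised n : Tdecay g (Nat.iter n (A_seq f) (coh f alpha)).
Proof.
  destruct f_linear_growth as (Cf & HCf & Hf).
  induction n as [|n IH]; simpl.
  - destruct coh_geom_bound as (c & rho & Hrho & Hc & Hb).
    apply (Tdecay_eigen g _ (1 - alpha * beta)); [apply (coh_eigen f g beta); auto|auto|].
    exists c, rho. split; auto.
  - apply (Tdecay_A f g beta Cf); auto.
Qed.
End CoherentVector.

(** * The exponential series *)

Definition spike (k : nat) (c : C) : nat -> C :=
  fun j => if Nat.eqb j k then c else RtoC 0.

Lemma geom_bounded_spike k c : geom_bounded (spike k c).
Proof.
  exists (Cmod c * 2 ^ k), (/ 2). split; [lra|]. intros j. unfold spike.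
  destruct (Nat.eqb_spec j k) as [->|_].
  - rewrite Rmult_assoc, <- Rpow_mult_distr, Rinv_r, pow1; lra.
  - rewrite Cmod_0. apply Rmult_le_pos; [apply Rmult_le_pos; [apply Cmod_ge_0|]|]; apply pow_le; lra.
Qed.

Lemma A_seq_spike f k c : A_seq f (spike k c) = spike (S k) (f (2 * S k)%nat * c)%C.
Proof.
  apply functional_extensionality; intros [|j]; unfold A_seq, spike; cbv beta iota; [reflexivity|].
  simpl Nat.eqb. destruct (Nat.eqb_spec j k) as [->|_]; ring.
Qed.

Lemma csum_spike (c : nat -> C) K k :
  csum (fun j => spike j (c j) k) K = if Nat.ltb k K then c k else RtoC 0.
Proof.
  induction K as [|K IH]; [reflexivity|]. rewrite csum_succ, IH. unfold spike.
  destruct (Nat.ltb_spec k K), (Nat.ltb_spec k (S K)), (Nat.eqb_spec k K); try lia; subst; ring.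
Qed.

Lemma opow_scale_Omega f a k :
  opow (scale a (fNLs2 f)) k Omega (ev (spike k (a ^ k * Fprod f k)%C)).
Proof.
  induction k as [|k IH]; cbn [opow].
  - assert (HO : Omega = ev (spike 0 (a ^ 0 * Fprod f 0)%C)).
    { apply ev_eq; intros [|j]; unfold spike; simpl; try reflexivity. ring. }
    split; [rewrite HO; apply geom_bounded_l2, geom_bounded_spike|auto].
  - exists (ev (spike k (a ^ k * Fprod f k)%C)). split; [auto|].
    exists (ev (A_seq f (spike k (a ^ k * Fprod f k)%C))). split.
    + apply fNLs2_ev; apply geom_bounded_l2; [|rewrite A_seq_spike]; apply geom_bounded_spike.
    + rewrite A_seq_spike, (ev_map (Cmult a)) by ring. f_equal.
      apply functional_extensionality; intros j. unfold spike.
      destruct (Nat.eqb j (S k)); [cbn [Fprod]; rewrite Cpow_S|]; ring.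
Qed.

Section Exponential.
Variables (f : nat -> C) (a : C) (c rho : R).
Hypotheses (Hrho : 0 <= rho < 1) (Hc : 0 <= c)
  (Hcoh : forall k, Cmod (coh f a k) <= c * rho ^ k).

Lemma exp_partial_sums_conv :
  l2conv (fun K n => csum (fun j => / INR (Factorial.fact j) *
                                     ev (spike j (a ^ j * Fprod f j)%C) n)%C K)
         (ev (coh f a)).
Proof.
  set (trunc K := fun k => if Nat.ltb k K then coh f a k else RtoC 0).
  replace (fun K n => csum (fun j => / INR (Factorial.fact j) *
                                      ev (spike j (a ^ j * Fprod f j)%C) n)%C K)
    with (fun K => ev (trunc K)).
  2: { apply functional_extensionality; intros K.
       rewrite (ev_csum (fun j => / INR (Factorial.fact j))%C). f_equal.
       apply functional_extensionality; intros k. unfold trunc. rewrite <- csum_spike.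
       apply csum_ext; intros j. unfold spike, coh. destruct (Nat.eqb k j); ring. }
  (* beyond [K] the error is [|coh k| <= c rho^k <= c tau^K tau^k], as [rho <= tau^2] *)
  set (tau := (1 + rho) / 2).
  assert (Htau : 0 <= tau < 1) by (unfold tau; lra).
  assert (Hrt : rho <= tau * tau) by (unfold tau; nra).
  apply (l2conv_ev _ _ c tau tau Htau Htau).
  - intros K k. unfold trunc. destruct (Nat.ltb_spec k K).
    + replace (coh f a k - coh f a k)%C with (RtoC 0) by ring. rewrite Cmod_0.
      apply Rmult_le_pos; [apply Rmult_le_pos; [auto|]|]; apply pow_le; lra.
    + replace (RtoC 0 - coh f a k)%C with (- coh f a k)%C by ring. rewrite Cmod_opp.
      eapply Rle_trans; [apply Hcoh|]. rewrite Rmult_assoc. apply Rmult_le_compat_l; [auto|].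
      apply Rle_trans with ((tau * tau) ^ k); [apply pow_incr; lra|].
      rewrite Rpow_mult_distr. apply Rmult_le_compat_r; [apply pow_le; lra|].
      apply pow_antitone; [lra|lia].
  - intros K. exists c, rho. split; [auto|]. intros k. unfold trunc.
    destruct (Nat.ltb k K); [auto|]. rewrite Cmod_0. apply Rmult_le_pos; [|apply pow_le]; lra.
  - exists c, rho. split; auto.
Qed.

Lemma exp_op_Omega : exp_op (scale a (fNLs2 f)) Omega (ev (coh f a)).
Proof.
  split; [intros k; eexists; apply opow_scale_Omega|].
  exists (fun k => ev (spike k (a ^ k * Fprod f k)%C)).
  split; [intros k; apply opow_scale_Omega|apply exp_partial_sums_conv].
Qed.

Lemma exp_op_Omega_unique x : exp_op (scale a (fNLs2 f)) Omega x -> x = ev (coh f a).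
Proof.
  intros (_ & s & Hs & Hconv).
  replace s with (fun k => ev (spike k (a ^ k * Fprod f k)%C)) in Hconv.
  - eapply l2conv_unique; [exact Hconv|apply exp_partial_sums_conv].
  - apply functional_extensionality; intros k.
    apply (opow_functional _ (scale_functional a _ (fNLs2_functional f)) k Omega);
      [apply opow_scale_Omega|auto].
Qed.
End Exponential.

Lemma opow_A_seq f u : (forall n, geom_bounded (Nat.iter n (A_seq f) u)) ->
  forall n, opow (fNLs2 f) n (ev u) (ev (Nat.iter n (A_seq f) u)).
Proof.
  intros Hb n. induction n as [|n IH]; simpl.
  - split; [apply geom_bounded_l2, (Hb 0%nat)|reflexivity].
  - exists (ev (Nat.iter n (A_seq f) u)). split; [auto|].
    apply fNLs2_ev; apply geom_bounded_l2; [apply (Hb n)|apply (Hb (S n))].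
Qed.

Lemma LH_ev g (S : vec -> Prop) phi :
  (forall x, S x -> exists w, Tdecay g w /\ x = ev w) -> LH S phi ->
  exists w, Tdecay g w /\ phi = ev w.
Proof.
  intros HS (m & c & v & Hv & ->). induction m as [|m IH].
  - exists (fun _ => RtoC 0). split; [apply Tdecay_zero|].
    apply ev_eq; reflexivity.
  - destruct IH as (w & Hw & Ew); [intros; apply Hv; lia|].
    destruct (HS (v m) (Hv m ltac:(lia))) as (wm & Hwm & Evm).
    exists (fun k => 1 * w k + c m * wm k)%C. split; [apply Tdecay_lin; auto|].
    rewrite <- (ev_map2 (fun x y => 1 * x + c m * y)%C) by ring.
    rewrite <- Ew, <- Evm. apply functional_extensionality; intros n.
    rewrite csum_succ. ring.
Qed.

Theorem mainTheorem7 (f g : nat -> C) (beta : C) (Mf : Rbar)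
  (Hfg : forall n : nat, Nat.even n = true ->
         Cminus (Cmult (g (n + 2)%nat) (f (n + 2)%nat))
                (if Nat.leb 2 n then Cmult (g n) (f n) else RtoC 0) = beta)
  (Hfpos : forall n : nat, (1 <= n)%nat -> 0 < Cmod (f (2 * n)%nat))
  (HMf : is_lim_seq (fun n => INR n / Cmod (f (2 * n)%nat)) Mf) :
  let inD (alpha : C) : Prop :=
    Cmod (Cminus (RtoC 1) (Cmult alpha beta)) < 1 /\ Rbar_lt (Finite (Cmod alpha)) Mf in
  let A := fNLs2 f in
  (forall alpha, inD alpha ->
     exists xi, exp_op (scale alpha A) Omega xi /\ forall n, dom (opow A n) xi) /\
  (forall phi,
     LH (fun v => exists (n : nat) (alpha : C) (xi : vec),
                    inD alpha /\ exp_op (scale alpha A) Omega xi /\ opow A n xi v) phi ->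
     comm_at N_op (scale (Cmult Ci (RtoC (/ 2))) (log_op (gN2L2 g))) phi
             (fun k => Cmult (Copp Ci) (phi k))).
Proof.
  intros inD A.
  pose proof (gf_linear f g beta Hfg) as Hgf.
  assert (Hcoh : forall alpha, inD alpha ->
            exp_op (scale alpha A) Omega (ev (coh f alpha)) /\
            (forall x, exp_op (scale alpha A) Omega x -> x = ev (coh f alpha)) /\
            forall n, opow A n (ev (coh f alpha)) (ev (Nat.iter n (A_seq f) (coh f alpha))) /\
                      Tdecay g (Nat.iter n (A_seq f) (coh f alpha))).
  { intros alpha [Heig Hrad].
    pose proof (Tdecay_coh_raised f g beta Mf alpha Hgf Hfpos HMf Heig Hrad) as Hdec.
    destruct (coh_geom_bound f beta Mf alpha Hfpos HMf Heig Hrad) as (c & rho & Hrho & Hc & Hb).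
    split; [apply (exp_op_Omega f alpha c rho); auto|].
    split; [apply (exp_op_Omega_unique f alpha c rho); auto|].
    intros n. split; [|auto].
    apply opow_A_seq. intros m. apply (Tdecay_geom_bounded g), Hdec. }
  split.
  - intros alpha Halpha. destruct (Hcoh alpha Halpha) as (Hexp & _ & Hraise).
    exists (ev (coh f alpha)). split; [auto|]. intros n. eexists. apply Hraise.
  - intros phi Hphi.
    apply LH_ev with (g := g) in Hphi as (w & Hw & ->); [apply comm_at_ev; auto|].
    intros x (n & alpha & xi & Halpha & Hexp & Hx).
    destruct (Hcoh alpha Halpha) as (_ & Huniq & Hraise).
    rewrite (Huniq xi Hexp) in Hx. destruct (Hraise n) as [Hop Hdec].
    exists (Nat.iter n (A_seq f) (coh f alpha)). split; [auto|].
    apply (opow_functional A (fNLs2_functional f) n _ _ _ Hx Hop).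
Qed.
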